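(* Let $s\ge 1$, $q=4^{2s}$, and let $\theta$ be the automorphism of $F_q$ given by $\theta(a)=a^{4^s}$. Let $n$ be an even positive integer and suppose $x^n-1=h(x)g(x)$ in $F_q[x;\theta]$, where the degree of $g(x)$ is odd. If $g(x)$ is a $\theta$-palindromic polynomial, then $h(x)$ is a palindromic polynomial.
   Context: $F_q[x;\theta]$ is the skew polynomial ring: polynomials $\sum a_ix^i$ with $a_i\in F_q$, usual addition, and multiplication determined by $xa=\theta(a)x$ for $a\in F_q$. A polynomial $f(x)=a_0+a_1x+\dots+a_tx^t$ of degree $t$ is palindromic if $a_i=a_{t-i}$ for all $i\in\{0,\ldots,t\}$, and $\theta$-palindromic if $a_i=\theta(a_{t-i})$ for all $i\in\{0,\ldots,t\}$. *)

From HB Require Import structures.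
From mathcomp Require Import all_boot all_order all_algebra all_field.
Set Implicit Arguments. Unset Strict Implicit. Unset Printing Implicit Defensive.
Import GRing.Theory.
Local Open Scope ring_scope.

Definition theta_s (F : fieldType) (s : nat) (a : F) : F := a ^+ (4 ^ s)%N.

(* Skew polynomials in F[x; theta] are represented by their coefficient
   sequences, i.e. by {poly F} (addition is the usual one).  Multiplication
   is the skew product determined by x a = theta(a) x, i.e.
   (sum_i a_i x^i)(sum_j b_j x^j) = sum_{i,j} a_i theta^i(b_j) x^(i+j). *)
Definition skew_mul (F : fieldType) (theta : F -> F) (p q : {poly F}) : {poly F} :=
  \poly_(k < (size p + size q).-1)
     \sum_(i < k.+1) p`_i * iter i theta (q`_(k - i)).

Definition palindromic (F : fieldType) (f : {poly F}) : Prop :=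
  forall i : nat, (i <= (size f).-1)%N -> f`_i = f`_((size f).-1 - i).

Definition theta_palindromic (F : fieldType) (theta : F -> F) (f : {poly F}) : Prop :=
  forall i : nat, (i <= (size f).-1)%N -> f`_i = theta (f`_((size f).-1 - i)).

(* Since #|F| = 4^(2s), theta is an involution and F has characteristic 2.
   Put m = deg h and t = deg g.  Comparing degrees gives n = m + t, so m is odd.
   Reindexing the skew product by i -> m - i, j -> t - j and using
   g_j = theta(g_(t-j)) together with theta^(m+1-i) = theta^i (as m + 1 is even)
   shows that the k-th coefficient of rev(h) g is the (n-k)-th coefficient of
   h g = x^n - 1.  Since x^n - 1 is anti-palindromic, (h + rev(h)) g = 0.  As
   theta is injective, the top coefficient of a skew product of nonzero
   polynomials is nonzero, hence h + rev(h) = 0, i.e. h = rev(h) in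
   characteristic 2. *)

From HB Require Import structures.
From mathcomp Require Import all_boot all_order all_algebra all_field.
Import GRing.Theory.
From mathcomp Require Import zify.
Local Open Scope ring_scope.

Lemma coef_Xn_sub_1_subn (R : nzRingType) n k : (k <= n)%N ->
  ('X^n - 1 : {poly R})`_(n - k) = - ('X^n - 1 : {poly R})`_k.
Proof.
move=> le_kn; rewrite !coefB !coefXn !coef1 opprB.
have -> : (n - k == n)%N = (k == 0)%N by apply/eqP/eqP; lia.
by have -> : (n - k == 0)%N = (k == n) by apply/eqP/eqP; lia.
Qed.

Section Reversal.

Context {F : fieldType}.
Implicit Types p h : {poly F}.

Definition revp p : {poly F} := \poly_(i < size p) p`_((size p).-1 - i).

Lemma coef_revp p i :
  (revp p)`_i = if (i < size p)%N then p`_((size p).-1 - i) else 0.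
Proof. exact: coef_poly. Qed.

Lemma size_revp p : (size (revp p) <= size p)%N.
Proof. exact: size_poly. Qed.

Lemma palindromic_addr_revp_eq0 h :
  2 \in [pchar F] -> h + revp h = 0 -> palindromic h.
Proof.
move=> pchar2 /eqP; rewrite addr_eq0 => /eqP h_eq i le_i.
rewrite {1}h_eq coefN coef_revp; case: ltnP => [_|le_hi]; first exact: oppr_pchar2.
(* [lia] sees copies of [size h] elaborated through different ring structures
   as distinct atoms; generalizing the size (here and below) merges them. *)
by rewrite oppr0 nth_default //; move: (size h) le_i le_hi => S; lia.
Qed.

End Reversal.

Section SkewProduct.

Context {F : fieldType} {th : F -> F}.
Implicit Types p q h g : {poly F}.
Hypothesis th0 : th 0 = 0.

Lemma iter_zero i : iter i th 0 = 0.
Proof. by elim: i => //= i ->. Qed.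

Lemma coef_skew_mul p q k :
  (skew_mul th p q)`_k = \sum_(i < k.+1) p`_i * iter i th q`_(k - i).
Proof.
rewrite coef_poly; case: ltnP => // hk; apply/esym/big1 => i _.
have [ltip|leqi] := ltnP i (size p); last by rewrite nth_default ?mul0r.
have leq_ki : (size q <= k - i)%N by lia.
by rewrite [q`_ _]nth_default ?iter_zero ?mulr0.
Qed.

Lemma skew_mul0p q : skew_mul th 0 q = 0.
Proof.
by apply/polyP => k; rewrite coef_skew_mul coef0 big1 // => i _; rewrite coef0 mul0r.
Qed.

Lemma skew_mulDl p p' q :
  skew_mul th (p + p') q = skew_mul th p q + skew_mul th p' q.
Proof.
apply/polyP => k; rewrite coefD !coef_skew_mul -big_split /=.
by apply: eq_bigr => i _; rewrite coefD mulrDl.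
Qed.

Lemma coef_skew_mul_pairs {p q M N} k :
  (size p <= M)%N -> (size q <= N)%N ->
  (skew_mul th p q)`_k =
  \sum_(i < M) \sum_(j < N | (i + j)%N == k) p`_i * iter i th q`_j.
Proof.
move=> lepM leqN; pose T i := p`_i * iter i th q`_(k - i).
have inner (i : 'I_M) :
    \sum_(j < N | (i + j)%N == k) p`_i * iter i th q`_j =
    if (i <= k)%N then T i else 0.
  case: leqP => [leik|ltki]; last by rewrite big_pred0 // => j; apply/negbTE; lia.
  rewrite (eq_bigl (fun j : 'I_N => j == (k - i)%N :> nat)) => [|j]; last first.
    by apply/eqP/eqP; lia.
  rewrite (big_ord1_eq _ (fun j => p`_i * iter i th q`_j)); case: ltnP => // leNk.
  by rewrite /T [q`_ _]nth_default ?iter_zero ?mulr0 //; apply: leq_trans leqN leNk.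
rewrite coef_skew_mul (eq_bigr _ (fun i _ => inner i)).
rewrite (big_ord_widen (M + k.+1) T (leq_addl _ _)).
rewrite (big_ord_widen (M + k.+1) (fun i => if (i <= k)%N then T i else 0)
  (leq_addr _ _)).
rewrite big_mkcond [RHS]big_mkcond /=; apply: eq_bigr => i _.
have [ltiM|leMi] := ltnP i M; first by rewrite ltnS.
by rewrite /T nth_default ?mul0r ?if_same //; apply: leq_trans leMi.
Qed.

Lemma coef_skew_mul_top p q :
  (skew_mul th p q)`_((size p).-1 + (size q).-1) =
  lead_coef p * iter (size p).-1 th (lead_coef q).
Proof.
have ltpk : ((size p).-1 < ((size p).-1 + (size q).-1).+1)%N by lia.
rewrite coef_skew_mul (bigD1 (Ordinal ltpk)) //= big1 ?addr0; first by rewrite addKn.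
move=> i /= neip; have {}neip : (i != (size p).-1 :> nat) by [].
have [ltip|leip] := ltnP i (size p).-1.
  have leq_top : (size q <= (size p).-1 + (size q).-1 - i)%N by lia.
  by rewrite [q`_ _]nth_default ?iter_zero ?mulr0.
have lepi : (size p <= i)%N by lia.
by rewrite nth_default ?mul0r.
Qed.

Hypothesis th_neq0 : forall x, x != 0 -> th x != 0.

Lemma iter_neq0 i x : x != 0 -> iter i th x != 0.
Proof. by move=> nzx; elim: i => //= i; apply: th_neq0. Qed.

Lemma size_skew_mul {p q} : p != 0 -> q != 0 ->
  size (skew_mul th p q) = (size p + size q).-1.
Proof.
move=> nzp nzq.
have lead_neq0 : (skew_mul th p q)`_((size p).-1 + (size q).-1) != 0.
  by rewrite coef_skew_mul_top mulf_neq0 ?iter_neq0 ?lead_coef_eq0.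
have size_top : (size p + size q).-1 = ((size p).-1 + (size q).-1).+1.
  by rewrite -!size_poly_gt0 in nzp nzq; lia.
apply/anti_leq; rewrite size_poly size_top /= ltnNge.
by apply: contra lead_neq0 => small; rewrite nth_default.
Qed.

Lemma skew_mul_eq0 {p q} : q != 0 -> skew_mul th p q = 0 -> p = 0.
Proof.
move=> nzq pq0; apply/eqP; apply: contraT => nzp.
have := size_skew_mul nzp nzq; rewrite pq0 size_poly0.
by rewrite -!size_poly_gt0 in nzp nzq; lia.
Qed.

Hypothesis thK : involutive th.

Lemma iter_involutive i x : iter i th x = if odd i then th x else x.
Proof. by elim: i => //= i ->; case: (odd i). Qed.

Lemma coef_skew_mul_revp p q k :
  odd (size p).-1 -> theta_palindromic th q ->
  (k <= (size p).-1 + (size q).-1)%N ->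
  (skew_mul th (revp p) q)`_k =
  (skew_mul th p q)`_((size p).-1 + (size q).-1 - k).
Proof.
move=> odd_p q_pal le_k.
rewrite (coef_skew_mul_pairs k (size_revp p) (leqnn (size q))).
rewrite (coef_skew_mul_pairs _ (leqnn (size p)) (leqnn (size q))).
rewrite (reindex_inj rev_ord_inj); apply: eq_bigr => i _.
rewrite (reindex_inj rev_ord_inj); case: i => a lt_a.
apply: eq_big => [[b lt_b]|[b lt_b] _] /=.
  by move: (size p) (size q) lt_a lt_b le_k => P Q *; apply/eqP/eqP; lia.
have rev_a : (size p - a.+1 < size p)%N by lia.
have revK_a : ((size p).-1 - (size p - a.+1) = a)%N by lia.
have rev_b : (size q - b.+1 = (size q).-1 - b)%N by lia.
have revK_b : ((size q).-1 - ((size q).-1 - b) = b)%N by lia.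
have odd_rev_a : odd (size p - a.+1).+1 = odd a.
  move: (size p) lt_a odd_p => P lt_aP odd_P.
  have -> : (P - a.+1).+1 = (P.-1.+1 - a)%N by lia.
  by rewrite oddB /= ?odd_P //; lia.
rewrite coef_revp rev_a revK_a rev_b (q_pal _ (leq_subr _ _)) revK_b -iterSr.
by rewrite !iter_involutive odd_rev_a.
Qed.

Lemma skew_mul_addr_revp_eq0 {h g n} :
  odd (size h).-1 -> theta_palindromic th g ->
  n = ((size h).-1 + (size g).-1)%N -> 'X^n - 1 = skew_mul th h g ->
  skew_mul th (h + revp h) g = 0.
Proof.
move=> odd_h g_pal size_hg hg_eq; apply/polyP => k.
rewrite skew_mulDl coefD coef0.
have [le_kn|lt_nk] := leqP k n.
  have le_k : (k <= (size h).-1 + (size g).-1)%N by rewrite -size_hg.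
  by rewrite coef_skew_mul_revp // -size_hg -hg_eq coef_Xn_sub_1_subn // addrN.
have n_gt0 : (0 < n)%N by rewrite size_hg; case: (size h).-1 odd_h.
have size_hg_le : (size (skew_mul th h g) <= k)%N by rewrite -hg_eq size_XnsubC.
have size_revp_h := size_revp h.
have size_rg_le : (size (skew_mul th (revp h) g) <= k)%N.
  have le_k : ((size (revp h) + size g).-1 <= k)%N by lia.
  exact: leq_trans (size_poly _ _) le_k.
by rewrite (nth_default _ size_hg_le) (nth_default _ size_rg_le) addr0.
Qed.

End SkewProduct.

Lemma even_card_pchar2 {F : finFieldType} : ~~ odd #|F| -> 2 \in [pchar F].
Proof.
move=> even_F; have : (-1 : F) ^+ #|F| = -1 by rewrite expf_card.
rewrite -signr_odd (negbTE even_F) expr0 => one_eqN1.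
by rewrite inE /= mulr2n {2}one_eqN1 subrr.
Qed.

Lemma theta_s_involutive {F : finFieldType} {s} :
  #|F| = (4 ^ (2 * s))%N -> involutive (@theta_s F s).
Proof.
by move=> card_F x; rewrite /theta_s -exprM -expnD addnn -mul2n -card_F expf_card.
Qed.

Lemma theta_s0 (F : fieldType) s : @theta_s F s 0 = 0.
Proof. by rewrite /theta_s expr0n expn_eq0. Qed.

Theorem theorem4 (s : nat) (F : finFieldType) (h g : {poly F}) (n : nat) :
  (1 <= s)%N ->
  #|F| = (4 ^ (2 * s))%N ->
  (0 < n)%N -> ~~ odd n ->
  g != 0 ->
  odd (size g).-1 ->
  'X^n - 1 = skew_mul (theta_s s) h g ->
  theta_palindromic (theta_s s) g ->
  palindromic h.
Proof.
move=> s_gt0 card_F n_gt0 even_n nz_g odd_g hg_eq g_pal.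
have thK := theta_s_involutive card_F.
have th0 := theta_s0 F s.
have th_neq0 (x : F) : x != 0 -> theta_s s x != 0.
  by move=> nz_x; rewrite -th0 (inj_eq (inv_inj thK)).
have nz_h : h != 0.
  apply: contra_eq_neq hg_eq => ->; rewrite skew_mul0p //.
  by rewrite -size_poly_eq0 size_XnsubC.
have size_hg : n = ((size h).-1 + (size g).-1)%N.
  have : size (skew_mul (theta_s s) h g) = n.+1 by rewrite -hg_eq size_XnsubC.
  rewrite (size_skew_mul th0 th_neq0 nz_h nz_g).
  rewrite -!size_poly_gt0 in nz_h nz_g.
  by move: (size h) (size g) nz_h nz_g => a b; lia.
have odd_h : odd (size h).-1.
  by move: even_n; rewrite size_hg oddD odd_g; case: (odd _).
have even_card : ~~ odd #|F| by rewrite card_F oddX orbF muln_eq0 -lt0n s_gt0.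
apply: (palindromic_addr_revp_eq0 h (even_card_pchar2 even_card)).
exact (skew_mul_eq0 th0 th_neq0 nz_g
  (skew_mul_addr_revp_eq0 th0 thK odd_h g_pal size_hg hg_eq)).
Qed.
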